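(* For each integer $n>2$, there is a finite group $Q_n$ with the following properties: (1) $Q_n$ is generated by two elements $A,B$; (2) $Q_n$ is metabelian; (3) $Q_n$ is $n$-periodic, i.e. $g^n=1$ for all $g\in Q_n$; (4) the generator $A$ and the commutator $[A,B]$ both have order exactly $n$. *)

From mathcomp Require Import all_boot all_fingroup all_solvable.
Set Implicit Arguments.
Unset Strict Implicit.
Unset Printing Implicit Defensive.

Definition metabelian (gT : finGroupType) (G : {set gT}) : bool :=
  abelian (G^`(1))%g.

(* Q_n is generated by A = (g, 0) and B = (0, 1) in the regular wreath product
   Z_n wr Z_n, realised as the permutations wr f k : (x, y) |-> (x + k, y + f x)
   of Z_n * Z_n.  Commutators of such permutations lie in the abelian base
   group of the wr f 0, so every subgroup is metabelian.  Since (wr f k)^n is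
   wr (x |-> sum_(l < n) f (x + l k)) (n k), the elements whose f is balanced
   (all these progression sums vanish) form a subgroup of exponent n.  If
   g 1 = g 0 + 1, then A and [A, B] = wr (x |-> g (x - 1) - g x) 0 both take
   a generator of Z_n as a value, so both have order n.  A balanced g with
   this step exists: the identity when n is odd, and a correction of the
   identity by multiples of n/2 when n is even. *)

From mathcomp Require Import all_boot all_fingroup all_solvable all_algebra.
From mathcomp Require Import zify.

Set Implicit Arguments.
Unset Strict Implicit.
Unset Printing Implicit Defensive.

Import GRing.Theory.

Lemma sum_periodic (F : nat -> nat) P r :
  (forall l, F (l + P) = F l) -> \sum_(l < P * r) F l = r * \sum_(l < P) F l.
Proof.
move=> F_per; elim: r => [|r IHr]; first by rewrite muln0 big_ord0.
rewrite mulnS big_split_ord /= mulSn -IHr; congr (_ + _).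
by apply: eq_bigr => l _; rewrite addnC F_per.
Qed.

Lemma eqn_modMl_coprime q k a b :
  coprime q k -> (k * a == k * b %[mod q]) = (a == b %[mod q]).
Proof.
move=> co_qk; wlog le_ab : a b / a <= b => [hwlog|].
  case: (leqP a b) => [/hwlog //|/ltnW/hwlog].
  by rewrite eq_sym => ->; apply: eq_sym.
rewrite eq_sym (eq_sym (a %% q)) !eqn_mod_dvd ?leq_mul2l ?le_ab ?orbT //.
by rewrite -mulnBr Gauss_dvdr.
Qed.

Lemma sum_dvdn_affine q x k :
  0 < q -> coprime q k -> \sum_(l < q) (q %| x + k * l) = 1.
Proof.
move=> q_gt0 co_qk.
pose phi (l : 'I_q) := Ordinal (ltn_pmod (x + k * l) q_gt0).
have phi_inj : injective phi.
  move=> a b /(congr1 val) /eqP; rewrite /= eqn_modDl eqn_modMl_coprime //.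
  by rewrite !modn_small // => /eqP/val_inj.
transitivity (\sum_(j < q) (j == 0 :> nat)).
  by rewrite [RHS](reindex_inj phi_inj).
by case: q {phi phi_inj} q_gt0 co_qk => // q _ _; rewrite big_ord_recl big1.
Qed.

Lemma odd_sum_dvdn_pow2 a m x k :
  0 < a -> odd m -> odd (\sum_(l < 2 ^ a * m) (2 ^ a %| x + k * l)) = odd k.
Proof.
case: a => // a _ odd_m; set F := fun l => 2 ^ a.+1 %| x + k * l.
have F_per P : 2 ^ a.+1 %| k * P -> forall l, F (l + P) = F l.
  by move=> dvd_kP l; rewrite /F mulnDr addnA dvdn_addl.
rewrite (@sum_periodic F) => [|l]; last by rewrite F_per ?dvdn_mull.
rewrite oddM odd_m /=.
have [odd_k|even_k] := boolP (odd k).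
  by rewrite sum_dvdn_affine ?expn_gt0 // coprimeXl // coprime2n.
rewrite expnSr (@sum_periodic F) ?oddM ?andbF // => l.
by rewrite F_per // expnSr [k * _]mulnC dvdn_pmul2l ?expn_gt0 // dvdn2.
Qed.

Lemma sum_affine N x k : \sum_(l < N) (x + k * l) = N * x + k * 'C(N, 2).
Proof.
rewrite big_split /= sum_nat_const card_ord -big_distrr /=.
by rewrite -bin2_sum big_mkord.
Qed.

Definition mod_balanced n (G : nat -> nat) :=
  forall x k, n %| \sum_(l < n) G ((x + k * l) %% n).

Lemma mod_balanced_id n : odd n -> mod_balanced n id.
Proof.
move=> odd_n x k; rewrite /dvdn modn_summ -/(dvdn _ _) sum_affine bin2odd //.
by rewrite mulnCA dvdn_add ?dvdn_mulr.
Qed.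

Lemma mod_balanced_half n c :
    ~~ odd n -> (forall x k, odd (\sum_(l < n) c ((x + k * l) %% n)) = odd k) ->
  mod_balanced n (fun y => y + n./2 * c y).
Proof.
move=> even_n odd_c x k.
have n_eq : n = n./2 * 2.
  by rewrite -[LHS]odd_double_half (negbTE even_n) muln2.
have n_gt0 : 0 < n.
  by case: n odd_c {even_n n_eq} => // /(_ 0 1); rewrite big_ord0.
have odd_pred : odd n.-1 by move: even_n; rewrite -(prednK n_gt0) /= negbK.
have C_eq : 'C(n, 2) = n./2 * n.-1.
  by rewrite bin2 {1}n_eq mulnAC muln2 half_double.
rewrite big_split /= -big_distrr /= /dvdn -modnDml modn_summ modnDml.
rewrite -/(dvdn _ _) sum_affine C_eq -addnA mulnCA -mulnDr.
rewrite (dvdn_addr _ (dvdn_mulr _ (dvdnn n))).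
rewrite {1}n_eq dvdn_pmul2l; last by rewrite n_eq muln_gt0 andbT in n_gt0.
by rewrite dvdn2 oddD oddM odd_pred odd_c andbT addbb.
Qed.

(* For even n, the identity misses being balanced by n/2 times the parity of the
   step k; the progression sums of [2 ^ logn 2 n %| y] have the parity of k and
   so repair this.  The summand [y %% n./2] has even progression sums and only
   serves to make skew_id n 1 = (skew_id n 0).+1. *)
Definition skew_id n y := y + n./2 * ((2 ^ logn 2 n %| y) + y %% n./2).

Lemma mod_balanced_skew_id n : 0 < n -> ~~ odd n -> mod_balanced n (skew_id n).
Proof.
move=> n_gt0 even_n; apply: mod_balanced_half => // x k.
have [m co_2m n_eq] := pfactor_coprime (isT : prime 2) n_gt0.
set a := logn 2 n in n_eq *; set h := n./2.
have a_gt0 : 0 < a by rewrite /a -pfactor_dvdn // expn1 dvdn2.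
have n_half : n = h * 2.
  by rewrite -[LHS]odd_double_half (negbTE even_n) muln2.
have dvd_2a_n : 2 ^ a %| n by rewrite [X in _ %| X]n_eq dvdn_mull.
have dvd_h_n : h %| n by rewrite [X in _ %| X]n_half dvdn_mulr.
have odd_dvd : odd (\sum_(l < n) (2 ^ a %| (x + k * l) %% n)) = odd k.
  under eq_bigr do rewrite /dvdn (modn_dvdm _ dvd_2a_n).
  by rewrite n_eq mulnC odd_sum_dvdn_pow2 // -coprime2n.
have even_mod : ~~ odd (\sum_(l < n) ((x + k * l) %% n %% h)).
  under eq_bigr do rewrite (modn_dvdm _ dvd_h_n).
  rewrite n_half (@sum_periodic (fun l => (x + k * l) %% h)) ?oddM ?andbF //.
  move=> l.
  by rewrite mulnDr addnA [_ + k * h]addnC modnMDl.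
by rewrite big_split /= oddD odd_dvd (negbTE even_mod) addbF.
Qed.

Lemma exists_mod_balanced_step n :
  2 < n -> exists G, mod_balanced n G /\ G 1 = (G 0).+1.
Proof.
move=> n_gt2; have [odd_n|even_n] := boolP (odd n).
  by exists id; split; first exact: mod_balanced_id.
exists (skew_id n); split.
  exact: mod_balanced_skew_id (ltnW (ltnW n_gt2)) even_n.
have h_gt1 : 1 < n./2.
  by move: n_gt2; rewrite -[n]odd_double_half (negbTE even_n) -muln2; lia.
have a_gt0 : 0 < logn 2 n.
  by rewrite -pfactor_dvdn ?expn1 ?dvdn2 // ltnW // ltnW.
rewrite /skew_id dvdn0 mod0n (modn_small h_gt1).
rewrite dvdn1 -(expn0 2) eqn_exp2l //.
by rewrite eqn0Ngt a_gt0 /= !muln1 add1n.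
Qed.

Local Open Scope ring_scope.
Local Open Scope group_scope.

Section Wreath.

Variable M : finZmodType.
Implicit Types (f : M -> M) (k x : M).

Definition wr_fun f k (z : M * M) : M * M := (z.1 + k, z.2 + f z.1).

Lemma wr_fun_inj f k : injective (wr_fun f k).
Proof. by move=> [x y] [x' y'] [] /addIr-> /addIr->. Qed.

Definition wr f k : {perm M * M} := perm (@wr_fun_inj f k).

Lemma wrE f k x y : wr f k (x, y) = (x + k, y + f x).
Proof. by rewrite permE. Qed.

Lemma eq_wr f f' k : f =1 f' -> wr f k = wr f' k.
Proof. by move=> eq_f; apply/permP => -[x y]; rewrite !wrE eq_f. Qed.

Lemma wrM f f' k k' :
  wr f k * wr f' k' = wr (fun x => f x + f' (x + k)) (k + k').
Proof. by apply/permP => -[x y]; rewrite permM !wrE /= !addrA. Qed.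

Lemma wr0 : wr (fun _ => 0) 0 = 1.
Proof. by apply/permP => -[x y]; rewrite wrE perm1 !addr0. Qed.

Lemma wrV f k : (wr f k)^-1 = wr (fun x => - f (x - k)) (- k).
Proof.
apply/eqP; rewrite eq_invg_mul wrM subrr -wr0; apply/eqP/eq_wr => x.
by rewrite addrK subrr.
Qed.

Lemma wrX f k j :
  wr f k ^+ j = wr (fun x => \sum_(l < j) f (x + k *+ l)) (k *+ j).
Proof.
elim: j => [|j IHj].
  by rewrite expg0 mulr0n -wr0; apply: eq_wr => x; rewrite big_ord0.
by rewrite expgSr IHj wrM -mulrSr; apply: eq_wr => x; rewrite big_ord_recr.
Qed.

Lemma wr0_eq1 f : (wr f 0 == 1) = [forall x, f x == 0].
Proof.
apply/eqP/forallP => [/permP wr1 x | f0]; last first.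
  by rewrite -wr0; apply: eq_wr => x; apply/eqP.
by move: (wr1 (x, 0)); rewrite wrE perm1 add0r => -[_ ->].
Qed.

Lemma expg_wr0 f j : wr f 0 ^+ j = wr (fun x => f x *+ j) 0.
Proof.
rewrite wrX mul0rn; apply: eq_wr => x.
by under eq_bigr do rewrite mul0rn addr0; rewrite sumr_const card_ord.
Qed.

Lemma order_wr0_dvdn f j : (#[wr f 0%R] %| j)%N = [forall x, f x *+ j == 0].
Proof. by rewrite order_dvdn expg_wr0 wr0_eq1. Qed.

Lemma commg_wr_shift f k :
  [~ wr f 0, wr (fun _ => 0) k] = wr (fun x => f (x - k) - f x) 0.
Proof.
rewrite commgEl conjgE !wrV !wrM oppr0 !add0r addNr.
by apply: eq_wr => x; rewrite !addr0 add0r addrC.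
Qed.

Definition base : {set {perm M * M}} := [set wr f 0 | f : {ffun M -> M}].

Lemma mem_base f : wr f 0 \in base.
Proof.
by apply/imsetP; exists (finfun f) => //; apply: eq_wr => x; rewrite ffunE.
Qed.

Lemma base_abelian : abelian base.
Proof.
apply/centsP => _ /imsetP[f _ ->] _ /imsetP[f' _ ->].
by rewrite /commute !wrM addr0; apply: eq_wr => x; rewrite !addr0 addrC.
Qed.

Lemma commg_wr f k f' k' : [~ wr f k, wr f' k'] \in base.
Proof.
rewrite commgEl conjgE !wrV !mulgA !wrM addrAC subrK addNr; exact: mem_base.
Qed.

Definition balanced n f : bool :=
  [forall x, forall k, \sum_(l < n) f (x + k *+ l) == 0].

Lemma balancedP n f :
  reflect (forall x k, \sum_(l < n) f (x + k *+ l) = 0) (balanced n f).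
Proof.
apply: (iffP forallP) => [bal_f x k | bal_f x].
  exact/eqP/(forallP (bal_f x)).
by apply/forallP => k; apply/eqP.
Qed.

Definition balanced_wr n : {set {perm M * M}} :=
  [set wr f k | f : {ffun M -> M} in [set f : {ffun M -> M} | balanced n f],
                k : M].

Lemma mem_balanced_wr n f k : balanced n f -> wr f k \in balanced_wr n.
Proof.
move=> bal_f; apply/imset2P; exists (finfun f) k => //.
  rewrite inE; apply/balancedP => x k'.
  rewrite -[RHS](balancedP _ _ bal_f x k').
  by apply: eq_bigr => l _; rewrite ffunE.
by apply: eq_wr => x; rewrite ffunE.
Qed.

Lemma balanced_wr_group_set n : group_set (balanced_wr n).
Proof.
apply/group_setP; split.
  rewrite -wr0; apply: mem_balanced_wr.
  by apply/balancedP => x k; rewrite big1.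
move=> _ _ /imset2P[f k bal_f _ ->] /imset2P[f' k' bal_f' _ ->].
rewrite !inE in bal_f bal_f'; rewrite wrM; apply: mem_balanced_wr.
apply/balancedP => x k0; rewrite big_split /= (balancedP _ _ bal_f) add0r.
rewrite -[RHS](balancedP _ _ bal_f' (x + k) k0).
by apply: eq_bigr => l _; rewrite addrAC.
Qed.

Canonical balanced_wr_group n := group (balanced_wr_group_set n).

Lemma balanced_wr_expg n s :
  (forall k : M, k *+ n = 0) -> s \in balanced_wr n -> s ^+ n = 1.
Proof.
move=> exp_n /imset2P[f k bal_f _ ->]; rewrite inE in bal_f.
by rewrite wrX exp_n -wr0; apply: eq_wr => x; apply: (balancedP _ _ bal_f).
Qed.

Lemma metabelian_balanced_wr n : metabelian (balanced_wr n).
Proof.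
rewrite /metabelian derg1 /commutator abelian_gen.
apply: abelianS base_abelian.
apply/subsetP => _ /imset2P[s t s_bal t_bal ->].
case/imset2P: s_bal => f k _ _ ->; case/imset2P: t_bal => f' k' _ _ ->.
exact: commg_wr.
Qed.

End Wreath.

(* 'Z_n is also a finGroupType under addition, so in group_scope [1 : 'Z_n]
   would denote 0: the ring unit is always written 1%R below. *)
Section CyclicCoefficients.

Variable n : nat.
Hypothesis n_gt1 : (1 < n)%N.

Lemma Zp_mulrn_n (k : 'Z_n) : k *+ n = 0.
Proof. by rewrite -mulr_natr pchar_Zp ?mulr0. Qed.

Lemma Zp_nat_eq0 j : ((j%:R : 'Z_n) == 0) = (n %| j)%N.
Proof. by rewrite -val_eqE /= val_Zp_nat. Qed.

Lemma balanced_natr G :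
  mod_balanced n G -> balanced n (fun y : 'Z_n => (G y)%:R).
Proof.
move=> bal_G; apply/balancedP => x k; apply/eqP; rewrite -natr_sum Zp_nat_eq0.
have val_step l : val (x + k *+ l) = ((x + k * l) %% n)%N.
  by rewrite -val_Zp_nat // natrD mulrnA !natr_Zp.
by under eq_bigr do rewrite val_step; apply: bal_G.
Qed.

Lemma natr_step G :
  G 1%N = (G 0%N).+1 -> (G (1%R : 'Z_n))%:R = (G (0 : 'Z_n))%:R + 1%R :> 'Z_n.
Proof.
have val1 : (1%R : 'Z_n) = 1%N :> nat.
  by rewrite -[1%R]mulr1n val_Zp_nat // modn_small.
by rewrite val1 => ->; rewrite mulrSr.
Qed.

Variable g : 'Z_n -> 'Z_n.
Hypotheses (bal_g : balanced n g) (g_step : g 1%R = g 0 + 1%R).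

Let A := wr g 0.
Let B := wr (fun _ => 0) (1%R : 'Z_n).

Lemma gen_sub_balanced_wr : <<[set A; B]>> \subset balanced_wr 'Z_n n.
Proof.
rewrite gen_subG subUset !sub1set !mem_balanced_wr //.
by apply/balancedP => x k; rewrite big1.
Qed.

Lemma order_wr0_Zp (f : 'Z_n -> 'Z_n) :
    (forall j, (forall x, f x *+ j = 0) -> (1%R : 'Z_n) *+ j = 0) ->
  #[wr f 0] = n.
Proof.
move=> f_gen; apply/eqP; rewrite eqn_dvd order_wr0_dvdn; apply/andP; split.
  by apply/forallP => x; rewrite Zp_mulrn_n.
rewrite -Zp_nat_eq0; apply/eqP/f_gen => x.
by apply/eqP; move: x; apply/forallP; rewrite -order_wr0_dvdn.
Qed.

Lemma order_wr_generator : #[A] = n.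
Proof.
apply: order_wr0_Zp => j g_ord.
by rewrite -[1%R](addKr (g 0)) -g_step mulrnDl mulNrn !g_ord oppr0 addr0.
Qed.

Lemma order_commg_wr_generators : #[[~ A, B]] = n.
Proof.
rewrite commg_wr_shift; apply: order_wr0_Zp => j /(_ 1%R).
by rewrite subrr g_step opprD addNKr mulNrn => /eqP; rewrite oppr_eq0 => /eqP.
Qed.

Lemma wr_generators_spec :
  [/\ metabelian <<[set A; B]>>,
       forall s, s \in <<[set A; B]>> -> s ^+ n = 1,
       #[A] = n
     & #[[~ A, B]] = n].
Proof.
split.
- exact: abelianS (dergS 1 gen_sub_balanced_wr) (metabelian_balanced_wr _ n).
- move=> s /(subsetP gen_sub_balanced_wr) /balanced_wr_expg; apply.
  exact: Zp_mulrn_n.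
- exact: order_wr_generator.
- exact: order_commg_wr_generators.
Qed.

End CyclicCoefficients.

Theorem proposition2p1 (n : nat) (hn : (2 < n)%N) :
  exists (gT : finGroupType) (Q : {group gT}) (A B : gT),
    [/\ Q :=: <<[set A; B]>>,
        metabelian Q,
        (forall g, g \in Q -> g ^+ n = 1),
        #[A] = n
      & #[[~ A, B]] = n].
Proof.
have n_gt1 : (1 < n)%N := ltnW hn.
have [G [bal_G G_step]] := exists_mod_balanced_step hn.
pose g (y : 'Z_n) : 'Z_n := (G y)%:R.
have bal_g : balanced n g := balanced_natr n_gt1 bal_G.
have [] := wr_generators_spec n_gt1 bal_g (natr_step n_gt1 G_step).
set A := wr g 0; set B := wr (fun _ => 0) (1%R : 'Z_n).
by exists _, <<[set A; B]>>%G, A, B.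
Qed.
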